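(* Let $T_1=(V_1,E_1)$ and $T_2=(V_2,E_2)$ be trees with $|V_1|=|V_2|=n$. Then $S_{T_1}\cap S_{T_2}\ne\emptyset$ if and only if $T_1$ and $T_2$ are isomorphic.
   Context: $\mathbb{C}[S_n]$ is the group algebra of the symmetric group $S_n$. A labeling of a graph $G=(V,E)$ with $|V|=n$ is a bijection $\mathcal{L}:V\to\{1,\dots,n\}$; under it an edge $\{u,v\}$ corresponds to the transposition $(\mathcal{L}(u)\,\mathcal{L}(v))\in S_n$. For a labeling $\mathcal{L}$ and an ordering $\pi=(e_1,\dots,e_m)$ of $E$, $\mathcal{K}_{\mathcal{L},\pi}(G)=n!\,(1-t_1)(1-t_2)\cdots(1-t_m)\in\mathbb{C}[S_n]$, where $t_r$ is the transposition corresponding to $e_r$ under $\mathcal{L}$ and the product is in the order of $\pi$. Define $S_G=\{\mathcal{K}_{\mathcal{L},\pi}(G):\mathcal{L}\text{ a labeling of }V,\ \pi\text{ an ordering of }E\}$. *)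

From HB Require Import structures.
From mathcomp Require Import all_boot all_order all_algebra all_fingroup all_field.
Set Implicit Arguments. Unset Strict Implicit. Unset Printing Implicit Defensive.
Import GRing.Theory Num.Theory.
Local Open Scope ring_scope.

Definition simple_graph (V : finType) (e : rel V) : Prop :=
  symmetric e /\ irreflexive e.

Definition has_cycle (V : finType) (e : rel V) : Prop :=
  exists (x : V) (p : seq V),
    [/\ (2 <= size p)%N, uniq (x :: p), path e x p & e (last x p) x].

Definition is_tree (V : finType) (e : rel V) : Prop :=
  [/\ simple_graph e, (0 < #|V|)%N, (forall x y : V, connect e x y) & ~ has_cycle e].

Definition graph_iso (V1 V2 : finType) (e1 : rel V1) (e2 : rel V2) : Prop :=
  exists f : V1 -> V2, bijective f /\ forall x y : V1, e2 (f x) (f y) = e1 x y.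

(* Elements of C[S_n] are represented by their coefficient functions S_n -> C. *)
Definition GA (n : nat) := {ffun 'S_n -> algC}.

Definition ga_delta n (s : 'S_n) : GA n := [ffun x => (x == s)%:R].
Definition ga_one n : GA n := ga_delta 1%g.
(* convolution product: (f g)(s) = sum_{a b = s} f(a) g(b) *)
Definition ga_mul n (f g : GA n) : GA n :=
  [ffun s => \sum_(a : 'S_n) f a * g (a^-1 * s)%g].
Definition ga_scale n (c : algC) (f : GA n) : GA n := [ffun s => c * f s].
Definition ga_one_minus n (t : 'S_n) : GA n :=
  [ffun x => (x == 1%g)%:R - (x == t)%:R].

Definition edge_transp (V : finType) n (L : V -> 'I_n) (uv : V * V) : 'S_n :=
  tperm (L uv.1) (L uv.2).

Definition K_elem (V : finType) n (L : V -> 'I_n) (pi : seq (V * V)) : GA n :=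
  ga_scale (n`!)%:R
    (foldr (fun uv acc => ga_mul (ga_one_minus (edge_transp L uv)) acc) (ga_one n) pi).

Definition edge_set (V : finType) (e : rel V) : {set {set V}} :=
  [set [set x.1; x.2] | x in [pred x : V * V | e x.1 x.2]].

(* pi is an ordering of E: a list of oriented representatives (u,v) of edges,
   whose underlying unordered edges list every edge of E exactly once. *)
Definition edge_ordering (V : finType) (e : rel V) (pi : seq (V * V)) : Prop :=
  all (fun uv => e uv.1 uv.2) pi /\
  perm_eq [seq [set uv.1; uv.2] | uv <- pi] (enum (edge_set e)).

Definition in_S_G (V : finType) (e : rel V) n (x : GA n) : Prop :=
  exists (L : V -> 'I_n) (pi : seq (V * V)),
    [/\ bijective L, edge_ordering e pi & x = K_elem L pi].

From HB Require Import structures.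
From mathcomp Require Import all_boot all_order all_algebra all_fingroup all_field.
Set Implicit Arguments. Unset Strict Implicit. Unset Printing Implicit Defensive.
Import GRing.Theory Num.Theory.
Local Open Scope ring_scope.

(* Write P_pi for the product of the factors 1 - t along an edge list pi of
   a forest, under an injective labelling.  Induction on pi, peeling off the
   first factor, shows that every permutation in the support of P_pi maps the
   label of a vertex to the label of a vertex in the same component, and then
   that the coefficient of a transposition (a b), a <> b, is minus the number
   of edges labelled {a, b}: the first factor contributes only through its
   own edge, whose endpoints lie in different components of the remaining
   edges.  So K_{L,pi}(T) determines the edge set of T through L, and equal
   values of K for two trees give the isomorphism L2^-1 o L1; conversely,
   relabelling along an isomorphism leaves K unchanged. *)

Lemma ga_mul_one_minusE n (t : 'S_n) (g : GA n) s :
  ga_mul (ga_one_minus t) g s = g s - g (t^-1 * s)%g.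
Proof.
have sum_delta j (G : 'S_n -> algC) : \sum_(a : 'S_n) (a == j)%:R * G a = G j.
  rewrite (bigD1 j) //= eqxx mul1r big1 ?addr0 // => a /negbTE ->.
  by rewrite mul0r.
rewrite ffunE; under eq_bigr => a _ do rewrite ffunE mulrBl.
rewrite sumrB (sum_delta 1%g (fun a => g (a^-1 * s)%g)).
by rewrite (sum_delta t (fun a => g (a^-1 * s)%g)) invg1 mul1g.
Qed.

Lemma tperm_eq1 (T : finType) (a b : T) : (tperm a b == 1%g) = (a == b).
Proof.
apply/eqP/eqP => [/permP/(_ a)|->]; last exact: tperm1.
by rewrite tpermL perm1.
Qed.

Lemma set2_inj (T : finType) (a b c d : T) :
  [set a; b] = [set c; d] -> (a = c /\ b = d) \/ (a = d /\ b = c).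
Proof.
move=> E.
have : a \in [set c; d] by rewrite -E set21.
have : b \in [set c; d] by rewrite -E set22.
have : c \in [set a; b] by rewrite E set21.
have : d \in [set a; b] by rewrite E set22.
rewrite !inE.
by do 4 (case/orP => /eqP ?; subst); by [left | right].
Qed.

Lemma eq_tperm_set2 (T : finType) (a b c d : T) : c != d ->
  (tperm a b == tperm c d) = ([set a; b] == [set c; d]).
Proof.
move=> cd; apply/eqP/eqP => [E|]; last first.
  by case/set2_inj => [[-> ->]|[-> ->]]; rewrite // tpermC.
have : tperm a b c = d by rewrite E tpermL.
case: tpermP => [-> ->|-> ->|_ _ dc] //; first exact: setUC.
by rewrite dc eqxx in cd.
Qed.

Lemma eq_edge_transp (V : finType) n (L : V -> 'I_n) x y :
  injective L -> x != y -> forall uv,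
  (edge_transp L uv == tperm (L x) (L y)) = ([set uv.1; uv.2] == [set x; y]).
Proof.
move=> L_inj xy uv; rewrite /edge_transp eq_tperm_set2 ?(inj_eq L_inj) //.
have set2_image u v : [set L u; L v] = L @: [set u; v] by rewrite imsetU1 imset_set1.
by rewrite !set2_image (inj_eq (imset_inj L_inj)).
Qed.

Lemma mem_edge_set (V : finType) (e : rel V) x y :
  symmetric e -> ([set x; y] \in edge_set e) = e x y.
Proof.
move=> e_sym; apply/imsetP/idP => [[[u v]]|e_xy]; last by exists (x, y).
by rewrite inE /= => e_uv /set2_inj [[-> ->]|[-> ->]]; rewrite // e_sym.
Qed.

Definition edge_list_rel (V : eqType) (pi : seq (V * V)) : rel V :=
  fun x y => ((x, y) \in pi) || ((y, x) \in pi).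

Lemma edge_list_rel_sym (V : eqType) (pi : seq (V * V)) :
  symmetric (edge_list_rel pi).
Proof. by move=> x y; rewrite /edge_list_rel orbC. Qed.

Lemma connect_edge_list_cons (V : finType) uv (pi : seq (V * V)) x y :
  connect (edge_list_rel pi) x y -> connect (edge_list_rel (uv :: pi)) x y.
Proof.
apply: connect_sub => {}x {}y exy; apply: connect1.
by case/orP: exy => exy; rewrite /edge_list_rel !in_cons exy ?orbT.
Qed.

(* An edge list spans a forest iff each edge joins two components of the
   graph of the edges after it. *)
Fixpoint forest_seq (V : finType) (pi : seq (V * V)) : bool :=
  if pi is uv :: pi' then ~~ connect (edge_list_rel pi') uv.1 uv.2 && forest_seq pi'
  else true.

Lemma forest_seq_loopless (V : finType) (pi : seq (V * V)) :
  forest_seq pi -> all (fun uv => uv.1 != uv.2) pi.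
Proof.
elim: pi => //= uv pi IH /andP [uv_new /IH ->]; rewrite andbT.
by apply: contraNneq uv_new => ->; exact: connect0.
Qed.

Lemma acyclic_forest_seq (V : finType) (e : rel V) (pi : seq (V * V)) :
  simple_graph e -> ~ has_cycle e -> all (fun uv => e uv.1 uv.2) pi ->
  uniq [seq [set uv.1; uv.2] | uv <- pi] -> forest_seq pi.
Proof.
move=> [e_sym e_irr] acyc.
elim: pi => //= uv pi IH /andP [e_uv e_pi] /andP [uv_new uniq_pi].
rewrite IH // andbT.
have sub_e : subrel (edge_list_rel pi) e.
  by move=> x y /orP [] /(allP e_pi) //=; rewrite e_sym.
apply/negP => /connectP [p p_path].
case/shortenP: p_path => q q_path q_uniq _ q_last.
have q_e := sub_path sub_e q_path.
case: q q_path q_uniq q_e q_last => [|y [|z q]] /= q_path q_uniq q_e q_last.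
- by move: e_uv; rewrite q_last e_irr.
- apply: (negP uv_new); apply/mapP; rewrite q_last.
  case/andP: q_path => /orP [] y_in _; [exists (uv.1, y) | exists (y, uv.1)] => //.
  exact: setUC.
- by apply: acyc; exists uv.1, [:: y, z & q]; split; rewrite //= -q_last e_sym.
Qed.

Section ProductOfOneMinusTranspositions.

Variables (V : finType) (n : nat) (L : V -> 'I_n).
Hypothesis L_inj : injective L.

Definition prod_one_minus (pi : seq (V * V)) : GA n :=
  foldr (fun uv acc => ga_mul (ga_one_minus (edge_transp L uv)) acc) (ga_one n) pi.

Lemma K_elemE pi s : K_elem L pi s = n`!%:R * prod_one_minus pi s.
Proof. by rewrite ffunE. Qed.

Lemma prod_one_minus_nil s : prod_one_minus [::] s = (s == 1%g)%:R.
Proof. by rewrite ffunE. Qed.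

Lemma prod_one_minus_cons uv pi s :
  prod_one_minus (uv :: pi) s =
    prod_one_minus pi s - prod_one_minus pi (edge_transp L uv * s)%g.
Proof. by rewrite /= ga_mul_one_minusE tpermV. Qed.

Lemma edge_transp_connect uv pi x :
  exists2 z, edge_transp L uv (L x) = L z & connect (edge_list_rel (uv :: pi)) x z.
Proof.
case: uv => u v; rewrite /edge_transp /=.
case: tpermP => [/L_inj ->|/L_inj ->|_ _]; last by exists x; last exact: connect0.
- by exists v; last by apply: connect1; rewrite /edge_list_rel mem_head.
- by exists u; last by apply: connect1; rewrite /edge_list_rel mem_head orbT.
Qed.

Lemma prod_one_minus_support pi s x y :
  prod_one_minus pi s != 0 -> s (L x) = L y -> connect (edge_list_rel pi) x y.
Proof.
elim: pi s x => [|uv pi IH] s x.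
  rewrite prod_one_minus_nil pnatr_eq0 eqb0 negbK => /eqP ->.
  by rewrite perm1 => /L_inj ->; exact: connect0.
rewrite prod_one_minus_cons => nz sx.
have [z tx xz] := edge_transp_connect uv pi x.
have [nz_s|nz_ts] : prod_one_minus pi s != 0 \/
                    prod_one_minus pi (edge_transp L uv * s)%g != 0.
  apply/orP; rewrite -negb_and; apply: contraNN nz.
  by case/andP => /eqP -> /eqP ->; rewrite subrr.
- exact/connect_edge_list_cons/(IH s x).
- apply: connect_trans xz (connect_edge_list_cons _ (IH _ z nz_ts _)).
  by rewrite permM -tx /edge_transp tpermK.
Qed.

Lemma prod_one_minus_shift uv pi a b : forest_seq (uv :: pi) ->
  prod_one_minus pi (edge_transp L uv * tperm a b)%g != 0 ->
  tperm a b = edge_transp L uv.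
Proof.
case: uv => u v; rewrite /edge_transp /= => /andP [uv_new _] nz.
have endpoint w z : tperm (L u) (L v) (L w) = L z ->
    ~~ connect (edge_list_rel pi) w z -> (L z == a) || (L z == b).
  move=> tw; apply: contraNT; rewrite negb_or => /andP [za zb].
  by apply: (prod_one_minus_support nz); rewrite permM tw tpermD // eq_sym.
have Lu : (L u == a) || (L u == b).
  by apply: endpoint (tpermR _ _) _; rewrite (sym_connect_sym (@edge_list_rel_sym _ pi)).
have Lv := endpoint u v (tpermL _ _) uv_new.
have uv_neq : L u != L v.
  by rewrite (inj_eq L_inj); apply: contraNneq uv_new => ->; exact: connect0.
case/orP: Lu => /eqP Lu; case/orP: Lv => /eqP Lv; rewrite Lu Lv //.
- by rewrite Lu Lv eqxx in uv_neq.
- exact: tpermC.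
- by rewrite Lu Lv eqxx in uv_neq.
Qed.

Lemma prod_one_minus_tperm pi a b : forest_seq pi ->
  prod_one_minus pi (tperm a b) =
    (a == b)%:R - (count (fun uv => edge_transp L uv == tperm a b) pi)%:R.
Proof.
elim: pi a b => [|uv pi IH] a b; first by rewrite prod_one_minus_nil tperm_eq1 subr0.
move=> forest_uv; have /andP [_ forest_pi] := forest_uv.
have at1 : prod_one_minus pi 1%g = 1.
  rewrite -[1%g](tperm1 a) IH // eqxx (@eq_in_count _ _ pred0) ?count_pred0 ?subr0 //.
  move=> uw /(allP (forest_seq_loopless forest_pi)) uw_ne /=; apply/negbTE.
  by rewrite tperm1 /edge_transp tperm_eq1 (inj_eq L_inj).
rewrite prod_one_minus_cons IH //=.
have [z|nz] := eqVneq (prod_one_minus pi (edge_transp L uv * tperm a b)%g) 0.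
  rewrite z subr0 (_ : (edge_transp L uv == tperm a b) = false) //.
  by apply/negbTE/eqP => tab; move: z; rewrite tab tperm2 at1 => /eqP; rewrite oner_eq0.
have tab := prod_one_minus_shift forest_uv nz.
have ab : a != b.
  rewrite -tperm_eq1 tab /edge_transp tperm_eq1 (inj_eq L_inj).
  by have /andP [] := forest_seq_loopless forest_uv.
rewrite -tab tperm2 at1 eqxx (negbTE ab) natrD.
by rewrite !sub0r opprD addrC.
Qed.

End ProductOfOneMinusTranspositions.

Lemma edge_K_elem (V : finType) n (e : rel V) (L : V -> 'I_n) pi :
  simple_graph e -> ~ has_cycle e -> injective L -> edge_ordering e pi ->
  forall x y, e x y = (x != y) && (K_elem L pi (tperm (L x) (L y)) != 0).
Proof.
move=> [e_sym e_irr] acyc L_inj [e_pi perm_pi] x y.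
have uniq_pi : uniq [seq [set uv.1; uv.2] | uv <- pi].
  by rewrite (perm_uniq perm_pi) enum_uniq.
have forest_pi := acyclic_forest_seq (conj e_sym e_irr) acyc e_pi uniq_pi.
rewrite K_elemE mulf_eq0 negb_or pnatr_eq0 -lt0n fact_gt0 /=.
rewrite prod_one_minus_tperm // (inj_eq L_inj).
have [<-|xy] := eqVneq x y; first by rewrite e_irr.
rewrite sub0r oppr_eq0 pnatr_eq0 -lt0n -has_count (eq_has (eq_edge_transp L_inj xy)).
by rewrite -(mem_edge_set _ _ e_sym) -mem_enum -(perm_mem perm_pi) -has_pred1 has_map.
Qed.

Lemma exists_labeling (V : finType) n : #|V| = n -> exists L : V -> 'I_n, bijective L.
Proof.
move=> cardV; exists (fun x => cast_ord cardV (enum_rank x)).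
exists (fun i => enum_val (cast_ord (esym cardV) i)) => [x|i] /=.
  by rewrite cast_ordK enum_rankK.
by rewrite enum_valK cast_ordKV.
Qed.

Lemma exists_edge_ordering (V : finType) (e : rel V) : exists pi, edge_ordering e pi.
Proof.
suff [pi [e_pi E]] : exists pi, all (fun uv => e uv.1 uv.2) pi /\
    [seq [set uv.1; uv.2] | uv <- pi] = enum (edge_set e).
  by exists pi; split; rewrite ?E.
have : all (mem (edge_set e)) (enum (edge_set e)) by apply/allP => X; rewrite mem_enum.
elim: (enum (edge_set e)) => [|X s IH] /=; first by exists [::].
case/andP => /imsetP [uv e_uv ->] /IH [pi [e_pi E]].
by exists (uv :: pi); rewrite /= E e_pi andbT; split.
Qed.

Lemma edge_ordering_intro (V : finType) (e : rel V) pi :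
  all (fun uv => e uv.1 uv.2) pi -> uniq [seq [set uv.1; uv.2] | uv <- pi] ->
  (forall x y, e x y -> [set x; y] \in [seq [set uv.1; uv.2] | uv <- pi]) ->
  edge_ordering e pi.
Proof.
move=> e_pi uniq_pi cover; split => //.
apply: uniq_perm; rewrite ?enum_uniq // => X; rewrite mem_enum.
apply/idP/imsetP => [/mapP [uv uv_in ->]|[xy e_xy ->]]; last exact: cover.
by exists uv => //; exact: (allP e_pi).
Qed.

Lemma edge_ordering_iso (V1 V2 : finType) (e1 : rel V1) (e2 : rel V2) f g pi :
  cancel f g -> cancel g f -> (forall x y, e2 (f x) (f y) = e1 x y) ->
  edge_ordering e1 pi -> edge_ordering e2 [seq (f uv.1, f uv.2) | uv <- pi].
Proof.
move=> fK gK f_iso [e_pi perm_pi].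
have map_set2 : [seq [set uv.1; uv.2] | uv <- [seq (f uv.1, f uv.2) | uv <- pi]] =
                [seq f @: (A : {set V1}) | A <- [seq [set uv.1; uv.2] | uv <- pi]].
  by rewrite -!map_comp; apply: eq_map => uv /=; rewrite imsetU1 imset_set1.
apply: edge_ordering_intro; rewrite ?map_set2.
- by rewrite all_map; apply/allP => uv /(allP e_pi); rewrite /= f_iso.
- by rewrite map_inj_uniq ?(perm_uniq perm_pi) ?enum_uniq //; exact/imset_inj/can_inj/fK.
- move=> x y e_xy.
  have -> : [set x; y] = f @: [set g x; g y] by rewrite imsetU1 imset_set1 !gK.
  apply: map_f.
  rewrite (perm_mem perm_pi) mem_enum; apply/imsetP; exists (g x, g y) => //.
  by rewrite inE /= -f_iso !gK.
Qed.

Lemma K_elem_relabel (V1 V2 : finType) n (L : V1 -> 'I_n) (f : V1 -> V2) g pi :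
  cancel f g -> K_elem (L \o g) [seq (f uv.1, f uv.2) | uv <- pi] = K_elem L pi.
Proof.
by move=> fK; congr ga_scale; elim: pi => //= uv pi ->; rewrite /edge_transp /= !fK.
Qed.

Theorem mainTheorem8 (n : nat) (V1 V2 : finType) (e1 : rel V1) (e2 : rel V2) :
  #|V1| = n -> #|V2| = n -> is_tree e1 -> is_tree e2 ->
  ((exists x : GA n, in_S_G e1 x /\ in_S_G e2 x) <-> graph_iso e1 e2).
Proof.
move=> card1 _ [graph1 _ _ acyc1] [graph2 _ _ acyc2]; split.
- case=> _ [[L1 [pi1 [L1_bij ord1 ->]]] [L2 [pi2 [L2_bij ord2 K_eq]]]].
  have [M2 L2K M2K] := L2_bij.
  exists (M2 \o L1); split; first by apply: bij_comp => //; exists L2.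
  move=> x y /=; rewrite (edge_K_elem graph2 acyc2 (bij_inj L2_bij) ord2).
  rewrite (edge_K_elem graph1 acyc1 (bij_inj L1_bij) ord1) !M2K -K_eq.
  by rewrite (inj_eq (can_inj M2K)) (inj_eq (bij_inj L1_bij)).
- case=> f [[g fK gK] f_iso].
  have [L1 L1_bij] := exists_labeling card1.
  have [pi1 ord1] := exists_edge_ordering e1.
  exists (K_elem L1 pi1); split; first by exists L1, pi1.
  exists (L1 \o g), [seq (f uv.1, f uv.2) | uv <- pi1]; split.
  + by apply: bij_comp => //; exists f.
  + exact: edge_ordering_iso fK gK f_iso ord1.
  + by rewrite (K_elem_relabel _ _ fK).
Qed.
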